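(* Let $\rho\in(0,\infty)$ and $d=d(L)\to0$ with $dL\to\infty$. Let $h\in\mathcal D(\hat A)$ and $H(\mu)=\mu(h)$. Then $$\lim_{N/L\to\rho}\ \sup_{\eta\in\Omega_{L,N}}\Big|\frac1{dL}\mathfrak L_{L,N}\big(H\circ\hat\mu_{L,N}^{(\cdot)}\big)(\eta)-\hat\mu_{L,N}^{(\eta)}(\hat Ah)\Big|=0.$$
   Context: Inclusion process: $\Omega_{L,N}=\{\eta\in\mathbb N_0^L:\sum_x\eta_x=N\}$, $\mathfrak L_{L,N}f(\eta)=\sum_{x\ne y}\eta_x(d+\eta_y)[f(\eta^{x,y})-f(\eta)]$, $\eta^{x,y}=\eta-e^x+e^y$; ''$N/L\to\rho$'' means $N,L\to\infty$ with $N/L\to\rho$. $\overline{\mathbb R}_+=[0,\infty]$; $\hat\mu^{(\eta)}_{L,N}=\sum_x\frac{\eta_x}N\delta_{dL\eta_x/N}$. $\hat Ah(z)=zh''(z)+(2-z)h'(z)+(h(0)-h(z))$ on $\mathcal D(\hat A)=\{h\in C(\overline{\mathbb R}_+):h(\infty)=0,h|_{\mathbb R_+}\in C_c^3(\mathbb R_+)\}\cup\{\text{constants}\}$. *)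

From Stdlib Require Import Reals Arith.
From Coquelicot Require Import Coquelicot.
Open Scope R_scope.

Fixpoint sumR (n : nat) (f : nat -> R) : R :=
  match n with O => 0 | S k => sumR k f + f k end.
Fixpoint sumN (n : nat) (f : nat -> nat) : nat :=
  match n with O => 0%nat | S k => (sumN k f + f k)%nat end.

(* a configuration on L sites 0..L-1 is eta : nat -> nat (values at x >= L are irrelevant);
   eta in Omega_{L,N} iff sum_{x<L} eta_x = N *)
Definition Omega (L N : nat) (eta : nat -> nat) : Prop := sumN L eta = N.

(* eta^{x,y} = eta - e^x + e^y (only used for x <> y, with weight eta_x) *)
Definition jump (eta : nat -> nat) (x y : nat) : nat -> nat :=
  fun z => if Nat.eqb z x then (eta x - 1)%nat
           else if Nat.eqb z y then S (eta y) else eta z.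

(* generator of the inclusion process on the complete graph with L sites, parameter d *)
Definition gen (L : nat) (d : R) (f : (nat -> nat) -> R) (eta : nat -> nat) : R :=
  sumR L (fun x => sumR L (fun y =>
    if Nat.eqb x y then 0
    else INR (eta x) * (d + INR (eta y)) * (f (jump eta x y) - f eta))).

(* integral of g against hat mu^{(eta)}_{L,N} = sum_x (eta_x/N) delta_{d L eta_x / N} *)
Definition muhat (L N : nat) (d : R) (eta : nat -> nat) (g : R -> R) : R :=
  sumR L (fun x => INR (eta x) / INR N * g (d * INR L * INR (eta x) / INR N)).

Definition deriv_on_Rplus (f f' : R -> R) : Prop :=
  forall x, 0 <= x ->
    filterlim (fun y => (f y - f x) / (y - x))
      (within (fun y => 0 <= y /\ y <> x) (locally x)) (locally (f' x)).

Definition cont_on_Rplus (f : R -> R) : Prop :=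
  forall x, 0 <= x -> filterlim f (within (fun y => 0 <= y) (locally x)) (locally (f x)).

(* h : [0,oo] -> R is represented by its restriction to [0,oo) (values on (-oo,0) irrelevant).
   D(hat A) = {h in C([0,oo]) : h(oo) = 0, h|_{R_+} in C_c^3(R_+)} U {constants}. *)
Definition in_DAhat (h : R -> R) : Prop :=
  (exists c, forall z, 0 <= z -> h z = c) \/
  (exists (M : R) (h1 h2 h3 : R -> R),
      (forall z, M <= z -> h z = 0) /\
      deriv_on_Rplus h h1 /\ deriv_on_Rplus h1 h2 /\ deriv_on_Rplus h2 h3 /\
      cont_on_Rplus h3).

(* hat A h (z) = z h''(z) + (2 - z) h'(z) + (h(0) - h(z)), with h' = h1, h'' = h2 *)
Definition Ahat (h h1 h2 : R -> R) (z : R) : R :=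
  z * h2 z + (2 - z) * h1 z + (h 0 - h z).

From Stdlib Require Import Reals Arith Lra Lia.
From Coquelicot Require Import Coquelicot.
Open Scope R_scope.

(* Write [D = d L] and [ep = D / N].  The observable [eta |-> muhat eta h] is
   additive, [sum_x q (eta x)] with [q k = P (ep k) / D] and [P z = z h z],
   and the generator of an additive observable depends only on the discrete
   increments [q (k-1) - q k] and [q (k+1) - q k] ([gen_additive]).
   Expanding [P] to second order with steps [-ep] and [+ep] turns each
   site's contribution into its share of [muhat eta (Ahat h)], using
   [Ahat h = P'' - P' + h 0], up to a first-order term and explicit
   remainders ([site_identity], [error_decomposition]).  With [B] a bound on
   [P''] and [z P''] and [w] the oscillation of [P''] over distances [ep],
   summing over sites with [sum_x eta x = N] bounds the error by
   [d B + ep B + d B / N + B / D + w (2 ep + 4 + 2 d / N)] ([generator_error]).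
   Such [B] and [w] exist because, for [h] in D(Â), [P''] is continuous and
   vanishes beyond some [M] ([DAhat_profile]); to use the mean value theorem
   on all of [R], the one-sided derivatives on [0,oo) are glued to Taylor
   polynomials on (-oo,0).  Finally [d -> 0], [d L -> oo] and
   [N / L -> rho > 0] make every error term small ([scaling_regime],
   [error_terms_small]). *)

Lemma sumR_ext n f g : (forall x, (x < n)%nat -> f x = g x) -> sumR n f = sumR n g.
Proof.
  induction n as [|n IH]; intros H; simpl; [reflexivity|].
  rewrite IH by (intros x Hx; apply H; lia). rewrite H by lia. reflexivity.
Qed.

Lemma sumR_plus n f g : sumR n (fun x => f x + g x) = sumR n f + sumR n g.
Proof. induction n as [|n IH]; simpl; [ring|]. rewrite IH; ring. Qed.

Lemma sumR_minus n f g : sumR n (fun x => f x - g x) = sumR n f - sumR n g.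
Proof. induction n as [|n IH]; simpl; [ring|]. rewrite IH; ring. Qed.

Lemma sumR_scal n c f : sumR n (fun x => c * f x) = c * sumR n f.
Proof. induction n as [|n IH]; simpl; [ring|]. rewrite IH; ring. Qed.

Lemma sumR_const n c : sumR n (fun _ => c) = INR n * c.
Proof. induction n as [|n IH]; simpl sumR; [simpl; ring|]. rewrite IH, S_INR; ring. Qed.

Lemma sumR_le n f g : (forall x, (x < n)%nat -> f x <= g x) -> sumR n f <= sumR n g.
Proof.
  induction n as [|n IH]; intros H; simpl; [lra|].
  pose proof (H n ltac:(lia)). pose proof (IH ltac:(intros; apply H; lia)). lra.
Qed.

Lemma sumR_abs n f : Rabs (sumR n f) <= sumR n (fun x => Rabs (f x)).
Proof.
  induction n as [|n IH]; simpl; [rewrite Rabs_R0; lra|].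
  eapply Rle_trans; [apply Rabs_triang|]. lra.
Qed.

Lemma sumR_INR n e : sumR n (fun x => INR (e x)) = INR (sumN n e).
Proof. induction n as [|n IH]; simpl sumR; simpl sumN; [reflexivity|]. rewrite IH, plus_INR; reflexivity. Qed.

Lemma sumN_term_le n e x : (x < n)%nat -> (e x <= sumN n e)%nat.
Proof.
  induction n as [|n IH]; intros H; simpl; [lia|].
  destruct (Nat.eq_dec x n); [subst; lia|]. specialize (IH ltac:(lia)); lia.
Qed.

Lemma sumR_skip n f x : (x < n)%nat ->
  sumR n (fun y => if Nat.eqb x y then 0 else f y) = sumR n f - f x.
Proof.
  induction n as [|n IH]; intros H; [lia|]. simpl. destruct (Nat.eq_dec x n) as [->|Hne].
  - rewrite Nat.eqb_refl, (sumR_ext n _ f); [ring|].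
    intros y Hy. destruct (Nat.eqb_spec n y); [lia|reflexivity].
  - rewrite IH by lia. destruct (Nat.eqb_spec x n); [lia|]. ring.
Qed.

Lemma sumR_single n y c : (y < n)%nat -> sumR n (fun z => if Nat.eqb z y then c else 0) = c.
Proof.
  intros Hy. rewrite (sumR_ext n _ (fun z => c - (if Nat.eqb y z then 0 else c))).
  - rewrite sumR_minus, sumR_skip, sumR_const by exact Hy. ring.
  - intros z _. destruct (Nat.eqb_spec z y), (Nat.eqb_spec y z); subst; try lia; ring.
Qed.

Lemma sumR_update2 n g x y A B : (x < n)%nat -> (y < n)%nat -> x <> y ->
  sumR n (fun z => if Nat.eqb z x then A else if Nat.eqb z y then B else g z)
  = sumR n g - g x - g y + A + B.
Proof.
  intros Hx Hy Hxy.
  rewrite (sumR_ext n _ (fun z => (g z + (if Nat.eqb z x then A - g x else 0))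
                                  + (if Nat.eqb z y then B - g y else 0))).
  - rewrite !sumR_plus, !sumR_single by assumption. ring.
  - intros z _. destruct (Nat.eqb_spec z x), (Nat.eqb_spec z y); subst; try lia; ring.
Qed.

(* Expansion of the off-diagonal double sum of [n x (c + n y) (a x + b y)]
   into single sums: the algebraic skeleton of the generator applied to an
   additive observable. *)
Lemma sumR_offdiag L (n a b : nat -> R) c :
  sumR L (fun x => sumR L (fun y =>
    if Nat.eqb x y then 0 else n x * (c + n y) * (a x + b y))) =
  (c * INR L + sumR L n) * sumR L (fun x => n x * a x)
  + sumR L n * sumR L (fun y => (c + n y) * b y)
  - sumR L (fun x => n x * (c + n x) * (a x + b x)).
Proof.
  set (S := sumR L n). set (Tb := sumR L (fun y => (c + n y) * b y)).
  rewrite (sumR_ext L _ (fun x => (c * INR L + S) * (n x * a x) + Tb * n x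
                                  - n x * (c + n x) * (a x + b x))).
  - rewrite sumR_minus, sumR_plus, !sumR_scal. fold S. ring.
  - intros x Hx. rewrite sumR_skip by exact Hx. f_equal.
    rewrite (sumR_ext L _ (fun y => (n x * a x) * (c + n y) + n x * ((c + n y) * b y)))
      by (intros; ring).
    rewrite sumR_plus, !sumR_scal, sumR_plus, sumR_const. fold S Tb. ring.
Qed.

Lemma gen_additive L d (q : nat -> R) (eta : nat -> nat) :
  let n x := INR (eta x) in
  let a x := q (eta x - 1)%nat - q (eta x) in
  let b x := q (S (eta x)) - q (eta x) in
  gen L d (fun e => sumR L (fun z => q (e z))) eta =
  (d * INR L + sumR L n) * sumR L (fun x => n x * a x)
  + sumR L n * sumR L (fun y => (d + n y) * b y)
  - sumR L (fun x => n x * (d + n x) * (a x + b x)).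
Proof.
  intros n a b. rewrite <- sumR_offdiag. unfold gen.
  apply sumR_ext; intros x Hx; apply sumR_ext; intros y Hy.
  destruct (Nat.eqb_spec x y) as [_|Hxy]; [reflexivity|].
  rewrite (sumR_ext L (fun z => q (jump eta x y z))
     (fun z => if Nat.eqb z x then q (eta x - 1)%nat
               else if Nat.eqb z y then q (S (eta y)) else q (eta z))).
  - rewrite sumR_update2 by assumption. unfold a, b, n. ring.
  - intros z _. unfold jump. destruct (Nat.eqb z x); [reflexivity|].
    destruct (Nat.eqb z y); reflexivity.
Qed.

Definition rderiv (f f' : R -> R) : Prop :=
  forall x, 0 <= x -> forall e, 0 < e -> exists dl, 0 < dl /\
    forall y, 0 <= y -> y <> x -> Rabs (y - x) < dl -> Rabs ((f y - f x) / (y - x) - f' x) < e.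

Definition rcont (f : R -> R) : Prop :=
  forall x, 0 <= x -> forall e, 0 < e -> exists dl, 0 < dl /\
    forall y, 0 <= y -> Rabs (y - x) < dl -> Rabs (f y - f x) < e.

Lemma rderiv_of_deriv_on_Rplus f f' : deriv_on_Rplus f f' -> rderiv f f'.
Proof.
  intros H x Hx e He.
  destruct (H x Hx (ball (f' x) (mkposreal e He)) (locally_ball _ _)) as [dl Hdl].
  exists dl; split; [apply cond_pos|].
  intros y Hy Hyx Hd. apply (Hdl y); [exact Hd | split; assumption].
Qed.

Lemma rderiv_unique f g f' g' : (forall z, 0 <= z -> f z = g z) ->
  rderiv f f' -> rderiv g g' -> forall x, 0 <= x -> f' x = g' x.
Proof.
  intros Efg Hf Hg x Hx. destruct (Req_dec (f' x) (g' x)) as [E|E]; [exact E|exfalso].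
  set (e := Rabs (f' x - g' x) / 2).
  assert (He : 0 < e) by (unfold e; apply Rdiv_lt_0_compat; [apply Rabs_pos_lt; lra|lra]).
  destruct (Hf x Hx e He) as [d1 [Hd1 Hy1]]. destruct (Hg x Hx e He) as [d2 [Hd2 Hy2]].
  set (m := Rmin d1 d2). assert (Hm : 0 < m) by (apply Rmin_pos; lra).
  assert (Hm1 : m <= d1) by apply Rmin_l. assert (Hm2 : m <= d2) by apply Rmin_r.
  assert (Hyx : Rabs (x + m / 2 - x) = m / 2) by (rewrite Rabs_right; lra).
  specialize (Hy1 (x + m / 2) ltac:(lra) ltac:(lra) ltac:(lra)).
  specialize (Hy2 (x + m / 2) ltac:(lra) ltac:(lra) ltac:(lra)).
  rewrite <- !Efg in Hy2 by lra.
  set (q := (f (x + m / 2) - f x) / (x + m / 2 - x)) in *.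
  pose proof (Rabs_triang (q - g' x) (- (q - f' x))) as T. rewrite Rabs_Ropp in T.
  replace (q - g' x + - (q - f' x)) with (f' x - g' x) in T by ring.
  unfold e in *. lra.
Qed.

Lemma rderiv_vanish f f' M c : rderiv f f' -> 0 <= M ->
  (forall z, M <= z -> f z = c) -> forall x, M <= x -> f' x = 0.
Proof.
  intros H HM Hc x Hx. destruct (Req_dec (f' x) 0) as [E|E]; [exact E|exfalso].
  destruct (H x ltac:(lra) _ (Rabs_pos_lt _ E)) as [dl [Hdl Hy]].
  specialize (Hy (x + dl / 2) ltac:(lra) ltac:(lra) ltac:(rewrite Rabs_right; lra)).
  rewrite !Hc in Hy by lra.
  replace ((c - c) / (x + dl / 2 - x) - f' x) with (- f' x) in Hy by (field; lra).
  rewrite Rabs_Ropp in Hy. lra.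
Qed.

Lemma rcont_of_rderiv f f' : rderiv f f' -> rcont f.
Proof.
  intros H x Hx e He. destruct (H x Hx 1 Rlt_0_1) as [d1 [Hd1 Hy]].
  set (K := Rabs (f' x) + 1).
  assert (HK : 0 < K) by (unfold K; pose proof (Rabs_pos (f' x)); lra).
  exists (Rmin d1 (e / K)). split; [apply Rmin_pos; [lra| apply Rdiv_lt_0_compat; lra]|].
  intros y Hy0 Hd. destruct (Req_dec y x) as [->|E].
  { replace (f x - f x) with 0 by ring. rewrite Rabs_R0; lra. }
  pose proof (Rmin_l d1 (e / K)). pose proof (Rmin_r d1 (e / K)).
  specialize (Hy y Hy0 E ltac:(lra)).
  assert (Hq : Rabs ((f y - f x) / (y - x)) <= K).
  { unfold K. pose proof (Rabs_triang ((f y - f x) / (y - x) - f' x) (f' x)) as T.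
    replace ((f y - f x) / (y - x) - f' x + f' x) with ((f y - f x) / (y - x)) in T by ring.
    lra. }
  replace (f y - f x) with ((f y - f x) / (y - x) * (y - x)) by (field; lra).
  rewrite Rabs_mult.
  apply Rle_lt_trans with (K * Rabs (y - x)); [apply Rmult_le_compat_r; [apply Rabs_pos|lra]|].
  apply Rlt_le_trans with (K * (e / K)); [apply Rmult_lt_compat_l; lra|].
  right; field; lra.
Qed.

Definition ext (f p : R -> R) (t : R) : R := if Rle_dec 0 t then f t else p t.

Lemma ext_eq f p z : 0 <= z -> ext f p z = f z.
Proof. intros Hz. unfold ext. destruct (Rle_dec 0 z); [reflexivity|lra]. Qed.

Lemma ext_derivable f f' p p' : rderiv f f' -> (forall z, derivable_pt_lim p z (p' z)) ->
  p 0 = f 0 -> p' 0 = f' 0 -> forall z, derivable_pt_lim (ext f p) z (ext f' p' z).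
Proof.
  intros Hf Hp H0 H0' z e He. unfold ext.
  destruct (Rtotal_order z 0) as [Hz|[Hz|Hz]].
  - destruct (Hp z e He) as [dp Hdp].
    assert (Hm : 0 < Rmin dp (-z)) by (apply Rmin_pos; [apply cond_pos|lra]).
    exists (mkposreal _ Hm). intros t Ht Ht2. simpl in Ht2.
    pose proof (Rmin_l dp (-z)). pose proof (Rmin_r dp (-z)).
    destruct (Rle_dec 0 (z + t)) as [Hc|_]; [apply Rabs_def2 in Ht2; lra|].
    destruct (Rle_dec 0 z); [lra|]. apply Hdp; [assumption|lra].
  - subst z. destruct (Hp 0 e He) as [dp Hdp].
    destruct (Hf 0 (Rle_refl 0) e He) as [df [Hdf Hdf2]].
    assert (Hm : 0 < Rmin dp df) by (apply Rmin_pos; [apply cond_pos|lra]).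
    exists (mkposreal _ Hm). intros t Ht Ht2. simpl in Ht2.
    pose proof (Rmin_l dp df). pose proof (Rmin_r dp df).
    destruct (Rle_dec 0 0); [|lra].
    destruct (Rle_dec 0 (0 + t)) as [Hc|Hc].
    + specialize (Hdf2 (0 + t) Hc). replace (0 + t - 0) with t in Hdf2 by ring.
      apply Hdf2; lra.
    + rewrite <- H0, <- H0'. apply Hdp; [assumption|lra].
  - destruct (Hf z (Rlt_le _ _ Hz) e He) as [df [Hdf Hdf2]].
    assert (Hm : 0 < Rmin df z) by (apply Rmin_pos; lra).
    exists (mkposreal _ Hm). intros t Ht Ht2. simpl in Ht2.
    pose proof (Rmin_l df z). pose proof (Rmin_r df z).
    destruct (Rle_dec 0 (z + t)) as [Hc|Hc]; [| apply Rabs_def2 in Ht2; lra].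
    destruct (Rle_dec 0 z); [|lra].
    specialize (Hdf2 (z + t) Hc). replace (z + t - z) with t in Hdf2 by ring.
    apply Hdf2; lra.
Qed.

Lemma ext_const_continuous f : rcont f -> forall z, continuity_pt (ext f (fun _ => f 0)) z.
Proof.
  intros Hc z e He. unfold ext.
  destruct (Rtotal_order z 0) as [Hz|[Hz|Hz]].
  - exists (- z). split; [lra|]. intros y [_ Hy]. simpl in *. unfold R_dist in Hy.
    apply Rabs_def2 in Hy. unfold R_dist.
    destruct (Rle_dec 0 y); [lra|]. destruct (Rle_dec 0 z); [lra|].
    replace (f 0 - f 0) with 0 by ring. rewrite Rabs_R0; lra.
  - subst z. destruct (Hc 0 (Rle_refl 0) e He) as [dl [Hdl Hy]].
    exists dl; split; [lra|]. intros y [_ Hyd]. simpl in *. unfold R_dist in *.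
    destruct (Rle_dec 0 0); [|lra]. destruct (Rle_dec 0 y) as [Hy0|Hy0].
    + apply Hy; assumption.
    + replace (f 0 - f 0) with 0 by ring. rewrite Rabs_R0; lra.
  - destruct (Hc z (Rlt_le _ _ Hz) e He) as [dl [Hdl Hy]].
    exists (Rmin dl z). split; [apply Rmin_pos; lra|]. intros y [_ Hyd].
    simpl in *. unfold R_dist in *.
    pose proof (Rmin_l dl z). pose proof (Rmin_r dl z).
    assert (Hyz : Rabs (y - z) < z) by lra. apply Rabs_def2 in Hyz.
    destruct (Rle_dec 0 y); [|lra]. destruct (Rle_dec 0 z); [|lra]. apply Hy; lra.
Qed.

Lemma continuity_of_is_derive f f' x : is_derive f x f' -> continuity_pt f x.
Proof. intros H. apply derivable_continuous_pt. exists f'. apply is_derive_Reals; exact H. Qed.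

Lemma mvt_bound (f f' : R -> R) B z : (forall x, is_derive f x (f' x)) -> 0 <= z ->
  (forall s, 0 <= s <= z -> Rabs (f' s) <= B) -> Rabs (f z - f 0) <= B * z.
Proof.
  intros Hf Hz HB.
  destruct (MVT_gen f 0 z f') as [c [Hc E]].
  { intros x _. apply Hf. }
  { intros x _. apply (continuity_of_is_derive _ _ _ (Hf x)). }
  rewrite Rmin_left, Rmax_right in Hc by lra.
  rewrite E, Rabs_mult, Rminus_0_r, (Rabs_right z) by lra.
  apply Rmult_le_compat_r; [lra| apply HB; lra].
Qed.

Lemma taylor2 (f f1 f2 : R -> R) :
  (forall x, is_derive f x (f1 x)) -> (forall x, is_derive f1 x (f2 x)) ->
  forall a t e, (forall s, Rmin a (a + t) <= s <= Rmax a (a + t) -> Rabs (f2 s - f2 a) <= e) ->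
  Rabs (f (a + t) - f a - t * f1 a - t ^ 2 / 2 * f2 a) <= e * t ^ 2.
Proof.
  intros Hf Hf1 a t e He.
  set (g := fun s : R => f s - f a - (s - a) * f1 a - (s - a) ^ 2 / 2 * f2 a).
  set (g' := fun s : R => f1 s - f1 a - (s - a) * f2 a).
  assert (Hg : forall x, is_derive g x (g' x)).
  { intros x. unfold g, g'. auto_derive; [exists (f1 x); apply Hf|].
    erewrite is_derive_unique; [|apply Hf]. field. }
  assert (Hg' : forall x, is_derive g' x (f2 x - f2 a)).
  { intros x. unfold g'. auto_derive; [exists (f2 x); apply Hf1|].
    erewrite is_derive_unique; [|apply Hf1]. field. }
  destruct (MVT_gen g a (a + t) g') as [c [Hc Hgc]].
  { intros x _. apply Hg. }
  { intros x _. apply (continuity_of_is_derive _ _ _ (Hg x)). }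
  destruct (MVT_gen g' a c (fun s => f2 s - f2 a)) as [c' [Hc' Hgc']].
  { intros x _. apply Hg'. }
  { intros x _. apply (continuity_of_is_derive _ _ _ (Hg' x)). }
  assert (Ga : g a = 0) by (unfold g; field).
  assert (G'a : g' a = 0) by (unfold g'; ring).
  simpl in Hgc, Hgc'. rewrite Ga in Hgc. rewrite G'a in Hgc'.
  replace (f (a + t) - f a - t * f1 a - t ^ 2 / 2 * f2 a) with ((f2 c' - f2 a) * (c - a) * t)
    by (replace (f (a + t) - f a - t * f1 a - t ^ 2 / 2 * f2 a) with (g (a + t))
          by (unfold g; replace (a + t - a) with t by ring; ring);
        replace (a + t - a) with t in Hgc by ring; nra).
  assert (Hca : Rabs (c - a) <= Rabs t).
  { unfold Rmin, Rmax in Hc. destruct (Rle_dec a (a + t)); apply Rabs_le;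
    unfold Rabs; destruct (Rcase_abs t); lra. }
  assert (Hc'2 : Rmin a (a + t) <= c' <= Rmax a (a + t)).
  { unfold Rmin, Rmax in *. destruct (Rle_dec a (a + t)); destruct (Rle_dec a c); lra. }
  rewrite !Rabs_mult, <- (pow2_abs t).
  replace (e * Rabs t ^ 2) with (e * Rabs t * Rabs t) by ring.
  apply Rmult_le_compat_r; [apply Rabs_pos|].
  apply Rmult_le_compat; try apply Rabs_pos; auto.
Qed.

Lemma taylor2_modulus (f f1 f2 : R -> R) dl w :
  (forall x, is_derive f x (f1 x)) -> (forall x, is_derive f1 x (f2 x)) ->
  (forall u v, 0 <= u -> 0 <= v -> Rabs (u - v) < dl -> Rabs (f2 u - f2 v) <= w) ->
  forall a t, 0 <= a -> 0 <= a + t -> Rabs t < dl ->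
  Rabs (f (a + t) - f a - t * f1 a - t ^ 2 / 2 * f2 a) <= w * t ^ 2.
Proof.
  intros Hf Hf1 Hw a t Ha Hat Ht. apply taylor2; [exact Hf|exact Hf1|].
  intros s Hs. apply Hw.
  - pose proof (Rmin_glb a (a + t) 0 Ha Hat). lra.
  - exact Ha.
  - unfold Rmin, Rmax in Hs. apply Rabs_def2 in Ht.
    destruct (Rle_dec a (a + t)); apply Rabs_def1; lra.
Qed.

Lemma bounded_of_support f M : (forall x, continuity_pt f x) -> 0 <= M ->
  (forall z, M <= z -> f z = 0) ->
  exists B, 0 <= B /\ forall z, 0 <= z -> Rabs (f z) <= B /\ Rabs (z * f z) <= B.
Proof.
  intros Hc HM Hz.
  assert (Hac : forall x, continuity_pt (fun t => Rabs (f t)) x).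
  { intros x. apply (continuity_pt_comp f Rabs); [apply Hc|apply Rcontinuity_abs]. }
  destruct (continuity_ab_maj (fun t => Rabs (f t)) 0 M HM (fun c _ => Hac c)) as [m [Hm _]].
  set (B0 := Rabs (f m)). assert (HB0 : 0 <= B0) by apply Rabs_pos.
  exists (B0 * (M + 1)). split; [nra|]. intros z Hz0.
  rewrite Rabs_mult, (Rabs_right z) by lra.
  destruct (Rle_dec z M) as [HzM|HzM].
  - pose proof (Hm z (conj Hz0 HzM)). pose proof (Rabs_pos (f z)). unfold B0 in *. split; nra.
  - rewrite Hz, Rabs_R0 by lra. split; nra.
Qed.

Lemma unif_cont_of_support f M : (forall x, continuity_pt f x) -> 0 <= M ->
  (forall z, M <= z -> f z = 0) -> forall e, 0 < e -> exists dl, 0 < dl /\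
    forall u v, 0 <= u -> 0 <= v -> Rabs (u - v) < dl -> Rabs (f u - f v) <= e.
Proof.
  intros Hc HM Hz e He.
  destruct (Heine f (fun c => 0 <= c <= M + 1) (compact_P3 0 (M + 1))
              (fun x _ => Hc x) (mkposreal e He)) as [dl Hdl].
  exists (Rmin dl 1). split; [apply Rmin_pos; [apply cond_pos|lra]|].
  intros u v Hu Hv Huv. pose proof (Rmin_l dl 1). pose proof (Rmin_r dl 1).
  assert (Huv1 : Rabs (u - v) < 1) by lra. apply Rabs_def2 in Huv1.
  destruct (Rle_dec u (M + 1)), (Rle_dec v (M + 1)).
  - left. apply (Hdl u v); [lra|lra|simpl; lra].
  - rewrite !Hz by lra. rewrite Rminus_0_r, Rabs_R0; lra.
  - rewrite !Hz by lra. rewrite Rminus_0_r, Rabs_R0; lra.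
  - rewrite !Hz by lra. rewrite Rminus_0_r, Rabs_R0; lra.
Qed.

Lemma DAhat_regular h h1 h2 : in_DAhat h -> rderiv h h1 -> rderiv h1 h2 ->
  exists M, 0 <= M /\ (forall z, M <= z -> h1 z = 0 /\ h2 z = 0) /\ rcont h2.
Proof.
  intros HD Hh Hh1.
  destruct HD as [[c Hc] | [M [g1 [g2 [g3 [HM [Hg1 [Hg2 [Hg3 _]]]]]]]]].
  - assert (Z1 : forall z, 0 <= z -> h1 z = 0) by exact (rderiv_vanish h h1 0 c Hh (Rle_refl 0) Hc).
    assert (Z2 : forall z, 0 <= z -> h2 z = 0) by exact (rderiv_vanish h1 h2 0 0 Hh1 (Rle_refl 0) Z1).
    exists 0. split; [lra|]. split; [intros z Hz; split; auto|].
    intros x Hx e He. exists 1. split; [lra|]. intros y Hy _.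
    rewrite !Z2 by assumption. rewrite Rminus_0_r, Rabs_R0; lra.
  - apply rderiv_of_deriv_on_Rplus in Hg1, Hg2, Hg3.
    pose proof (Rmax_l M 0) as HM1. pose proof (Rmax_r M 0) as HM0.
    set (Mp := Rmax M 0) in *.
    assert (HMp : forall z, Mp <= z -> h z = 0) by (intros z Hz; apply HM; lra).
    assert (E1 : forall z, 0 <= z -> g1 z = h1 z)
      by exact (rderiv_unique h h g1 h1 (fun _ _ => eq_refl) Hg1 Hh).
    assert (E2 : forall z, 0 <= z -> g2 z = h2 z) by exact (rderiv_unique g1 h1 g2 h2 E1 Hg2 Hh1).
    assert (Z1 : forall z, Mp <= z -> h1 z = 0) by exact (rderiv_vanish h h1 Mp 0 Hh HM0 HMp).
    exists Mp. split; [exact HM0|]. split.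
    + intros z Hz. split; [auto|]. exact (rderiv_vanish h1 h2 Mp 0 Hh1 HM0 Z1 z Hz).
    + intros x Hx e He. destruct (rcont_of_rderiv g2 g3 Hg3 x Hx e He) as [dl [Hdl Hy]].
      exists dl. split; [exact Hdl|]. intros y Hy0 Hyx. rewrite <- !E2 by assumption. auto.
Qed.

(** Since [muhat eta h = sum_x P (ep (eta x)) / D], [P] rather than [h] is
    what gets Taylor-expanded. *)
Lemma DAhat_profile h h1 h2 : in_DAhat h -> deriv_on_Rplus h h1 -> deriv_on_Rplus h1 h2 ->
  exists (P P1 P2 : R -> R) M, 0 <= M /\
    (forall x, is_derive P x (P1 x)) /\ (forall x, is_derive P1 x (P2 x)) /\
    (forall x, continuity_pt P2 x) /\ (forall z, M <= z -> P2 z = 0) /\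
    (forall z, 0 <= z -> P z = z * h z /\ P1 z = h z + z * h1 z /\ P2 z = 2 * h1 z + z * h2 z).
Proof.
  intros HD Hh Hh1. apply rderiv_of_deriv_on_Rplus in Hh, Hh1.
  destruct (DAhat_regular h h1 h2 HD Hh Hh1) as [M [HM [Hvan Hc2]]].
  set (H := ext h (fun t => h 0 + h1 0 * t + h2 0 * t ^ 2 / 2)).
  set (H1 := ext h1 (fun t => h1 0 + h2 0 * t)).
  set (H2 := ext h2 (fun _ => h2 0)).
  assert (dH : forall z, is_derive H z (H1 z)).
  { intros z. apply is_derive_Reals. apply ext_derivable; [exact Hh| |simpl; field|simpl; ring].
    intros t. apply is_derive_Reals. auto_derive; [exact I|]. field. }
  assert (dH1 : forall z, is_derive H1 z (H2 z)).
  { intros z. apply is_derive_Reals. apply ext_derivable; [exact Hh1| |simpl; ring|reflexivity].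
    intros t. apply is_derive_Reals. auto_derive; [exact I|]. simpl; ring. }
  exists (fun t => t * H t), (fun t => H t + t * H1 t), (fun t => 2 * H1 t + t * H2 t), M.
  split; [exact HM|]. split; [|split; [|split; [|split]]].
  - intros x. auto_derive; [exists (H1 x); apply dH|].
    erewrite is_derive_unique; [|apply dH]. ring.
  - intros x. auto_derive; [split; [exists (H1 x); apply dH| split; [exists (H2 x); apply dH1|exact I]]|].
    erewrite (is_derive_unique (fun t => H t)); [|apply dH].
    erewrite (is_derive_unique (fun t => H1 t)); [|apply dH1]. ring.
  - intros x. apply (continuity_pt_plus (fun t => 2 * H1 t) (fun t => t * H2 t)).
    + apply (continuity_pt_mult (fun _ => 2) H1); [apply continuity_pt_const; intros ? ?; reflexivity|].
      exact (continuity_of_is_derive _ _ _ (dH1 x)).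
    + apply (continuity_pt_mult id H2); [apply derivable_continuous_pt, derivable_pt_id|].
      exact (ext_const_continuous h2 Hc2 x).
  - intros z Hz. unfold H1, H2. rewrite !ext_eq by lra. destruct (Hvan z Hz) as [-> ->]. ring.
  - intros z Hz. unfold H, H1, H2. rewrite !ext_eq by exact Hz. auto.
Qed.

(** Second-order and Taylor-remainder part of the generator contribution of a
    site with occupation [n]; [p2] is the value of [P''] at the site and [r],
    [s] are the remainders of the backward and forward second-order Taylor
    expansions of [P] with step [ep]. *)
Definition site_rem (D N d ep n p2 r s : R) : R :=
  ep ^ 2 * (D * n / 2 + N * d / 2 - n * d) * p2 - ep * n * (ep * n * p2)
  + (D + N) * (n * r) + N * (d + n) * s - (d + n) * (n * r) - n * (d + n) * s.

(* Algebra of a single site: the generator contribution written through the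
   Taylor expansions of the two increments, minus the site's share of
   [muhat (Ahat h)] (recall [Ahat h = P'' - P' + h 0]). *)
Lemma site_identity D N d n ep p1 p2 r s h0 : D <> 0 -> N <> 0 -> ep * N = D ->
  let a := (- ep * p1 + ep ^ 2 / 2 * p2 + r) / D in
  let b := (ep * p1 + ep ^ 2 / 2 * p2 + s) / D in
  / D * ((D + N) * (n * a) + N * ((d + n) * b) - n * (d + n) * (a + b))
    - n / N * (p2 - p1 + h0)
  = d / D * (p1 - h0) + (d / D - n / N) * h0 + site_rem D N d ep n p2 r s / D ^ 2.
Proof.
  intros HD HN Hep a b. unfold a, b, site_rem. subst D.
  field. split; [exact HN|]. intros E. apply HD. rewrite E. ring.
Qed.

Lemma site_rem_bound D N d ep n p2 r s B w :
  0 <= D -> 0 <= d -> 0 <= ep -> 0 <= n <= N ->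
  Rabs p2 <= B -> Rabs (ep * n * p2) <= B ->
  Rabs (n * r) <= n * (w * ep ^ 2) -> Rabs s <= w * ep ^ 2 ->
  Rabs (site_rem D N d ep n p2 r s)
  <= ep ^ 2 * (D * n / 2 + N * d / 2 + n * d) * B + ep * n * B
     + w * ep ^ 2 * ((D + N) * n + N * (d + n) + 2 * (d + N) * n).
Proof.
  intros HD Hd Hep [Hn HnN] Hp2 Hzp2 Hr Hs. unfold site_rem.
  assert (Hc : Rabs (ep ^ 2 * (D * n / 2 + N * d / 2 - n * d))
               <= ep ^ 2 * (D * n / 2 + N * d / 2 + n * d)).
  { rewrite Rabs_mult, (Rabs_right (ep ^ 2)) by (apply Rle_ge, pow_le; lra).
    apply Rmult_le_compat_l; [apply pow_le; lra|]. apply Rabs_le. nra. }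
  assert (T1 : Rabs (ep ^ 2 * (D * n / 2 + N * d / 2 - n * d) * p2)
               <= ep ^ 2 * (D * n / 2 + N * d / 2 + n * d) * B).
  { rewrite Rabs_mult. apply Rmult_le_compat; try apply Rabs_pos; assumption. }
  assert (T2 : Rabs (ep * n * (ep * n * p2)) <= ep * n * B).
  { rewrite Rabs_mult, (Rabs_right (ep * n)) by nra. apply Rmult_le_compat_l; nra. }
  assert (T3 : Rabs ((D + N) * (n * r)) <= (D + N) * (n * (w * ep ^ 2))).
  { rewrite Rabs_mult, (Rabs_right (D + N)) by lra. apply Rmult_le_compat_l; lra. }
  assert (T4 : Rabs (N * (d + n) * s) <= N * (d + n) * (w * ep ^ 2)).
  { rewrite Rabs_mult, (Rabs_right (N * (d + n))) by nra. apply Rmult_le_compat_l; nra. }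
  assert (T5 : Rabs ((d + n) * (n * r)) <= (d + N) * (n * (w * ep ^ 2))).
  { rewrite Rabs_mult, (Rabs_right (d + n)) by lra.
    apply Rmult_le_compat; try lra; apply Rabs_pos. }
  assert (T6 : Rabs (n * (d + n) * s) <= n * (d + N) * (w * ep ^ 2)).
  { rewrite Rabs_mult, (Rabs_right (n * (d + n))) by nra.
    apply Rmult_le_compat; try nra; apply Rabs_pos. }
  apply Rabs_le_between in T1, T2, T3, T4, T5, T6. apply Rabs_le_between. lra.
Qed.

Lemma Omega_occupation L N eta : Omega L N eta ->
  sumR L (fun x => INR (eta x)) = INR N /\ forall x, (x < L)%nat -> INR (eta x) <= INR N.
Proof.
  intros HOm. split; [rewrite sumR_INR, HOm; reflexivity|].
  intros x Hx. apply le_INR. rewrite <- HOm. apply sumN_term_le; exact Hx.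
Qed.

Lemma error_decomposition (L N : nat) (d : R) (eta : nat -> nat) (h h1 h2 P P1 P2 : R -> R) :
  (1 <= N)%nat -> (1 <= L)%nat -> 0 < d -> Omega L N eta ->
  (forall z, 0 <= z -> P z = z * h z /\ P1 z = h z + z * h1 z /\ P2 z = 2 * h1 z + z * h2 z) ->
  let D := d * INR L in
  let ep := D / INR N in
  let z x := ep * INR (eta x) in
  let r x := P (ep * INR (eta x - 1)) - P (z x) - (- ep * P1 (z x) + ep ^ 2 / 2 * P2 (z x)) in
  let s x := P (z x + ep) - P (z x) - (ep * P1 (z x) + ep ^ 2 / 2 * P2 (z x)) in
  / D * gen L d (fun e => muhat L N d e h) eta - muhat L N d eta (Ahat h h1 h2)
  = sumR L (fun x => d / D * (P1 (z x) - h 0))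
    + sumR L (fun x => site_rem D (INR N) d ep (INR (eta x)) (P2 (z x)) (r x) (s x) / D ^ 2).
Proof.
  intros HN HL Hd HOm Eq D ep z r s.
  assert (HNr : 0 < INR N) by (apply lt_0_INR; lia).
  assert (HLr : 0 < INR L) by (apply lt_0_INR; lia).
  assert (HD : 0 < D) by (unfold D; nra).
  assert (HepN : ep * INR N = D) by (unfold ep; field; lra).
  destruct (Omega_occupation L N eta HOm) as [Sn _].
  assert (zpos : forall x, 0 <= z x) by (intros x; pose proof (pos_INR (eta x)); unfold z, ep; 
                                        apply Rmult_le_pos; [apply Rdiv_le_0_compat|]; lra).
  (* [muhat _ h] is additive with site weight [q k = P (ep k) / D] *)
  set (q k := INR k / INR N * h (d * INR L * INR k / INR N)).
  assert (Fq : forall k, q k = P (ep * INR k) / D).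
  { intros k. assert (Hk : 0 <= ep * INR k)
      by (pose proof (pos_INR k); apply Rmult_le_pos; [unfold ep; apply Rdiv_le_0_compat|]; lra).
    destruct (Eq _ Hk) as [-> _]. unfold q.
    replace (d * INR L * INR k / INR N) with (ep * INR k) by (unfold ep, D; field; lra).
    unfold ep, D. field. lra. }
  pose proof (gen_additive L d q eta) as G. cbv beta zeta in G. rewrite Sn in G.
  change (fun e => muhat L N d e h) with (fun e => sumR L (fun z => q (e z))). rewrite G.
  assert (HA : muhat L N d eta (Ahat h h1 h2)
               = sumR L (fun x => INR (eta x) / INR N * (P2 (z x) - P1 (z x) + h 0))).
  { apply sumR_ext. intros x _.
    replace (d * INR L * INR (eta x) / INR N) with (z x) by (unfold z, ep, D; field; lra).
    destruct (Eq _ (zpos x)) as [_ [-> ->]]. unfold Ahat. ring. }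
  rewrite HA.
  (* the constant term [sum_x (d / D - eta x / N) h 0] vanishes as [L d = D] *)
  assert (H0 : sumR L (fun x => (d / D - INR (eta x) / INR N) * h 0) = 0).
  { rewrite (sumR_ext L _ (fun x => d / D * h 0 + (- h 0 / INR N) * INR (eta x))) by (intros; field; lra).
    rewrite sumR_plus, sumR_const, sumR_scal, Sn. unfold D. field. lra. }
  transitivity (sumR L (fun x => d / D * (P1 (z x) - h 0))
                + sumR L (fun x => (d / D - INR (eta x) / INR N) * h 0)
                + sumR L (fun x => site_rem D (INR N) d ep (INR (eta x)) (P2 (z x)) (r x) (s x) / D ^ 2));
    [|rewrite H0; ring].
  rewrite <- !sumR_plus.
  transitivity (sumR L (fun x =>
      / D * ((D + INR N) * (INR (eta x) * (q (eta x - 1)%nat - q (eta x))))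
      + / D * (INR N * ((d + INR (eta x)) * (q (S (eta x)) - q (eta x))))
      - / D * (INR (eta x) * (d + INR (eta x)) * (q (eta x - 1)%nat - q (eta x) + (q (S (eta x)) - q (eta x))))
      - INR (eta x) / INR N * (P2 (z x) - P1 (z x) + h 0))).
  - rewrite !sumR_minus, !sumR_plus, !sumR_scal. unfold D. ring.
  - apply sumR_ext. intros x _.
    pose proof (site_identity D (INR N) d (INR (eta x)) ep (P1 (z x)) (P2 (z x)) (r x) (s x) (h 0)
                  ltac:(lra) ltac:(lra) HepN) as I.
    cbv zeta in I. refine (eq_trans _ I). unfold r, s. rewrite !Fq, S_INR.
    replace (ep * (INR (eta x) + 1)) with (z x + ep) by (unfold z; ring). fold (z x).
    field. lra.
Qed.

(* The backward one is weighted by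
   [k]: it only needs to be small for occupied sites, where [ep k - ep >= 0]. *)
Lemma step_remainders (P P1 P2 : R -> R) dl w ep (k : nat) :
  (forall x, is_derive P x (P1 x)) -> (forall x, is_derive P1 x (P2 x)) ->
  (forall u v, 0 <= u -> 0 <= v -> Rabs (u - v) < dl -> Rabs (P2 u - P2 v) <= w) ->
  0 < ep < dl ->
  let z := ep * INR k in
  Rabs (INR k * (P (ep * INR (k - 1)) - P z - (- ep * P1 z + ep ^ 2 / 2 * P2 z)))
    <= INR k * (w * ep ^ 2) /\
  Rabs (P (z + ep) - P z - (ep * P1 z + ep ^ 2 / 2 * P2 z)) <= w * ep ^ 2.
Proof.
  intros dP dP1 Hmod [Hep Hepdl] z.
  pose proof (pos_INR k) as Hk0.
  assert (Hzk : z = ep * INR k) by reflexivity. clearbody z.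
  pose proof (taylor2_modulus P P1 P2 dl w dP dP1 Hmod z) as Tay.
  split.
  - destruct (Nat.eq_dec k 0) as [->|Hk].
    + simpl INR. rewrite !Rmult_0_l, Rabs_R0. lra.
    + assert (Hk1 : 1 <= INR k) by (apply (le_INR 1); lia).
      rewrite Rabs_mult, (Rabs_right (INR k)) by lra. apply Rmult_le_compat_l; [lra|].
      rewrite minus_INR by lia.
      replace (ep * (INR k - INR 1)) with (z + - ep) by (rewrite Hzk; simpl; ring).
      specialize (Tay (- ep) ltac:(nra) ltac:(nra) ltac:(rewrite Rabs_Ropp, Rabs_right; lra)).
      replace ((- ep) ^ 2) with (ep ^ 2) in Tay by ring.
      replace (P (z + - ep) - P z - (- ep * P1 z + ep ^ 2 / 2 * P2 z))
        with (P (z + - ep) - P z - - ep * P1 z - ep ^ 2 / 2 * P2 z) by ring.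
      exact Tay.
  - replace (P (z + ep) - P z - (ep * P1 z + ep ^ 2 / 2 * P2 z))
      with (P (z + ep) - P z - ep * P1 z - ep ^ 2 / 2 * P2 z) by ring.
    apply Tay; [nra|nra|rewrite Rabs_right; lra].
Qed.

Lemma generator_error (L N : nat) (d : R) (eta : nat -> nat) (h h1 h2 P P1 P2 : R -> R) (B w dl : R) :
  (1 <= N)%nat -> (1 <= L)%nat -> 0 < d -> Omega L N eta ->
  (forall x, is_derive P x (P1 x)) -> (forall x, is_derive P1 x (P2 x)) ->
  (forall z, 0 <= z -> P z = z * h z /\ P1 z = h z + z * h1 z /\ P2 z = 2 * h1 z + z * h2 z) ->
  (forall z, 0 <= z -> Rabs (P2 z) <= B /\ Rabs (z * P2 z) <= B) ->
  (forall u v, 0 <= u -> 0 <= v -> Rabs (u - v) < dl -> Rabs (P2 u - P2 v) <= w) ->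
  d * INR L / INR N < dl ->
  Rabs (/ (d * INR L) * gen L d (fun e => muhat L N d e h) eta - muhat L N d eta (Ahat h h1 h2))
  <= d * B + d * INR L / INR N * B + d * B / INR N + B / (d * INR L)
     + w * (2 * (d * INR L / INR N) + 4 + 2 * d / INR N).
Proof.
  intros HN HL Hd HOm dP dP1 Eq Bnd Hmod Hstep.
  pose proof (error_decomposition L N d eta h h1 h2 P P1 P2 HN HL Hd HOm Eq) as Dec.
  cbv zeta in Dec. rewrite Dec. clear Dec.
  assert (HNr : 0 < INR N) by (apply lt_0_INR; lia).
  assert (HLr : 0 < INR L) by (apply lt_0_INR; lia).
  set (D := d * INR L) in *. assert (HD : 0 < D) by (unfold D; nra).
  set (ep := D / INR N) in *. assert (Hep : 0 < ep) by (unfold ep; apply Rdiv_lt_0_compat; lra).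
  assert (HepN : ep * INR N = D) by (unfold ep; field; lra).
  assert (HDL : D = d * INR L) by reflexivity. clearbody ep D.
  destruct (Omega_occupation L N eta HOm) as [Sn nle].
  assert (zpos : forall x, 0 <= ep * INR (eta x)) by (intros x; pose proof (pos_INR (eta x)); nra).
  (* the first-order term: [P'] is [B]-Lipschitz and [P' 0 = h 0] *)
  assert (S1 : Rabs (sumR L (fun x => d / D * (P1 (ep * INR (eta x)) - h 0))) <= d * B).
  { assert (HP10 : P1 0 = h 0) by (destruct (Eq 0 (Rle_refl 0)) as [_ [-> _]]; ring).
    eapply Rle_trans; [apply sumR_abs|].
    apply Rle_trans with (sumR L (fun x => d / D * B * ep * INR (eta x))).
    - apply sumR_le. intros x _.
      rewrite <- HP10, Rabs_mult, (Rabs_right (d / D)) by (apply Rle_ge, Rdiv_le_0_compat; lra).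
      replace (d / D * B * ep * INR (eta x)) with (d / D * (B * (ep * INR (eta x)))) by ring.
      apply Rmult_le_compat_l; [apply Rdiv_le_0_compat; lra|].
      apply (mvt_bound P1 P2 B _ dP1 (zpos x)). intros u Hu. apply Bnd. lra.
    - right. rewrite sumR_scal, Sn, Rmult_assoc, HepN, HDL. field. lra. }
  assert (S2 : Rabs (sumR L (fun x => site_rem D (INR N) d ep (INR (eta x)) (P2 (ep * INR (eta x)))
        (P (ep * INR (eta x - 1)) - P (ep * INR (eta x)) - (- ep * P1 (ep * INR (eta x)) + ep ^ 2 / 2 * P2 (ep * INR (eta x))))
        (P (ep * INR (eta x) + ep) - P (ep * INR (eta x)) - (ep * P1 (ep * INR (eta x)) + ep ^ 2 / 2 * P2 (ep * INR (eta x))))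
        / D ^ 2))
      <= ep * B + d * B / INR N + B / D + w * (2 * ep + 4 + 2 * d / INR N)).
  { eapply Rle_trans; [apply sumR_abs|].
    apply Rle_trans with (sumR L (fun x =>
       (ep ^ 2 * (D / 2 + d) * B + ep * B + w * ep ^ 2 * (D + 4 * INR N + 2 * d)) / D ^ 2 * INR (eta x)
       + (ep ^ 2 * INR N * d / 2 * B + w * ep ^ 2 * INR N * d) / D ^ 2)).
    2:{ right. rewrite sumR_plus, sumR_scal, sumR_const, Sn.
        replace ep with (D / INR N) by (rewrite <- HepN; field; lra). rewrite HDL. field. lra. }
    apply sumR_le. intros x Hx.
    destruct (step_remainders P P1 P2 dl w ep (eta x) dP dP1 Hmod (conj Hep Hstep)) as [Hr Hs].
    destruct (Bnd _ (zpos x)) as [B1 B2].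
    unfold Rdiv at 1. rewrite Rabs_mult, (Rabs_right (/ D ^ 2))
      by (apply Rle_ge, Rlt_le, Rinv_0_lt_compat, pow_lt; lra).
    eapply Rle_trans.
    - apply Rmult_le_compat_r; [apply Rlt_le, Rinv_0_lt_compat, pow_lt; lra|].
      apply site_rem_bound; try lra; [split; [apply pos_INR|apply nle, Hx]|exact B1|exact B2|exact Hr|exact Hs].
    - right. field. lra. }
  eapply Rle_trans; [apply Rabs_triang|]. lra.
Qed.

Lemma step_small rho d m (L N : nat) : 0 < rho -> (0 < L)%nat -> (0 < N)%nat ->
  Rabs (INR N / INR L - rho) < rho / 2 -> 0 < d < rho / 2 * m -> d * INR L / INR N < m.
Proof.
  intros Hrho HL HN Hrat [Hd Hdm].
  assert (HLr : 0 < INR L) by (apply lt_0_INR; lia).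
  assert (HNr : 0 < INR N) by (apply lt_0_INR; lia).
  assert (Hq : rho / 2 * INR L < INR N).
  { apply Rabs_def2 in Hrat as [_ Hrat].
    assert (Hr : rho / 2 < INR N / INR L) by lra.
    apply (Rmult_lt_compat_r (INR L)) in Hr; [|lra].
    replace (INR N / INR L * INR L) with (INR N) in Hr by (field; lra). exact Hr. }
  apply (Rmult_lt_reg_r (INR N)); [lra|].
  replace (d * INR L / INR N * INR N) with (d * INR L) by (field; lra).
  assert (0 < m) by (apply (Rmult_lt_reg_l (rho / 2)); lra).
  apply Rlt_trans with (rho / 2 * m * INR L); [apply Rmult_lt_compat_r; lra|]. nra.
Qed.

Lemma scaling_regime rho (d : nat -> R) a K : 0 < rho -> (forall L, 0 < d L) ->
  is_lim_seq d 0 -> is_lim_seq (fun L => d L * INR L) p_infty -> 0 < a ->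
  exists L0 : nat, forall L N : nat, (L0 <= L)%nat -> (L0 <= N)%nat ->
    Rabs (INR N / INR L - rho) < rho / 2 ->
    (1 <= L)%nat /\ (1 <= N)%nat /\ d L < a /\ d L * INR L / INR N < a /\ K < d L * INR L.
Proof.
  intros Hrho dpos dlim Dlim Ha.
  set (d0 := Rmin (rho / 2 * a) a).
  assert (Hd0 : 0 < d0) by (unfold d0; apply Rmin_pos; nra).
  assert (Hd0a : d0 <= rho / 2 * a) by apply Rmin_l. assert (Hd0a' : d0 <= a) by apply Rmin_r.
  apply is_lim_seq_spec in dlim, Dlim.
  destruct (dlim (mkposreal d0 Hd0)) as [L1 HL1]. destruct (Dlim K) as [L2 HL2].
  exists (max (max L1 L2) 1). intros L N HLL HNN Hrat.
  specialize (HL1 L ltac:(lia)). specialize (HL2 L ltac:(lia)). simpl in HL1.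
  rewrite Rminus_0_r, Rabs_right in HL1 by (left; apply dpos).
  repeat split; try lia; try lra.
  apply (step_small rho); [exact Hrho|lia|lia|exact Hrat|split; [apply dpos|lra]].
Qed.

Lemma error_terms_small eps B d ep D N w : 0 < eps -> 0 <= B -> 0 < d -> 0 < ep -> 1 <= N ->
  d <= Rmin 1 (eps / (8 * (B + 1))) -> ep <= Rmin 1 (eps / (8 * (B + 1))) ->
  / (eps / (8 * (B + 1))) <= D -> w = eps / 16 ->
  d * B + ep * B + d * B / N + B / D + w * (2 * ep + 4 + 2 * d / N) <= eps.
Proof.
  intros He HB Hd Hep HN Hdc Hepc HD ->.
  set (c := eps / (8 * (B + 1))) in *.
  assert (Hc : 0 < c) by (unfold c; apply Rdiv_lt_0_compat; lra).
  assert (HcB : c * B <= eps / 8) by (unfold c; apply (Rmult_le_reg_r (B + 1)); [lra|];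
                                     replace (eps / (8 * (B + 1)) * B * (B + 1)) with (eps / 8 * B) by (field; lra); nra).
  assert (Hc1 : Rmin 1 c <= 1) by apply Rmin_l. assert (Hcc : Rmin 1 c <= c) by apply Rmin_r.
  assert (HDpos : 0 < D) by (pose proof (Rinv_0_lt_compat c Hc); lra).
  assert (HinvD : / D <= c) by (rewrite <- (Rinv_inv c); apply Rinv_le_contravar; [apply Rinv_0_lt_compat|]; lra).
  assert (T1 : d * B <= eps / 8) by nra.
  assert (T2 : ep * B <= eps / 8) by nra.
  assert (T3 : d * B / N <= eps / 8).
  { apply Rle_trans with (d * B); [|exact T1]. unfold Rdiv.
    rewrite <- (Rmult_1_r (d * B)) at 2. apply Rmult_le_compat_l; [nra|].
    rewrite <- Rinv_1. apply Rinv_le_contravar; lra. }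
  assert (T4 : B / D <= eps / 8) by (unfold Rdiv; nra).
  assert (T5 : d / N <= 1).
  { apply (Rmult_le_reg_r N); [lra|]. replace (d / N * N) with d by (field; lra). lra. }
  assert (T6 : eps / 16 * (2 * ep + 4 + 2 * d / N) <= eps / 2).
  { apply (Rle_trans _ (eps / 16 * 8)); [apply Rmult_le_compat_l; lra|lra]. }
  lra.
Qed.

Theorem lemma3p2 (rho : R) (d : nat -> R) (h h1 h2 : R -> R) :
  0 < rho ->
  (forall L, 0 < d L) ->
  is_lim_seq d 0 ->
  is_lim_seq (fun L => d L * INR L) p_infty ->
  in_DAhat h ->
  deriv_on_Rplus h h1 -> deriv_on_Rplus h1 h2 ->
  forall eps, 0 < eps ->
  exists delta, 0 < delta /\ exists L0 : nat,
    forall L N : nat, (L0 <= L)%nat -> (L0 <= N)%nat ->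
      Rabs (INR N / INR L - rho) < delta ->
      forall eta, Omega L N eta ->
        Rabs (/ (d L * INR L) * gen L (d L) (fun e => muhat L N (d L) e h) eta
              - muhat L N (d L) eta (Ahat h h1 h2)) <= eps.
Proof.
  intros Hrho dpos dlim Dlim HDA Hh Hh1 eps Heps.
  destruct (DAhat_profile h h1 h2 HDA Hh Hh1) as [P [P1 [P2 [M [HM [dP [dP1 [cP2 [Hsupp Eq]]]]]]]]].
  destruct (bounded_of_support P2 M cP2 HM Hsupp) as [B [HB Bnd]].
  set (w := eps / 16). set (c := eps / (8 * (B + 1))).
  assert (Hc : 0 < c) by (unfold c; apply Rdiv_lt_0_compat; lra).
  destruct (unif_cont_of_support P2 M cP2 HM Hsupp w ltac:(unfold w; lra)) as [dl [Hdl Hmod]].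
  set (a := Rmin dl (Rmin 1 c)).
  assert (Ha : 0 < a) by (unfold a; repeat apply Rmin_pos; lra).
  assert (Hadl : a <= dl) by apply Rmin_l. assert (Hac : a <= Rmin 1 c) by apply Rmin_r.
  destruct (scaling_regime rho d a (/ c) Hrho dpos dlim Dlim Ha) as [L0 HL0].
  exists (rho / 2). split; [lra|]. exists L0.
  intros L N HLL HNN Hrat eta HOm.
  destruct (HL0 L N HLL HNN Hrat) as [HL [HN [Hda [Hstep HD]]]].
  pose proof (dpos L) as HdL.
  apply (Rle_trans _ _ _ (generator_error L N (d L) eta h h1 h2 P P1 P2 B w dl HN HL
                            HdL HOm dP dP1 Eq Bnd Hmod ltac:(lra))).
  apply error_terms_small; fold c; try lra; try reflexivity.
  - apply Rdiv_lt_0_compat; [apply Rmult_lt_0_compat; [exact HdL|apply lt_0_INR; lia]|apply lt_0_INR; lia].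
  - apply (le_INR 1); lia.
Qed.
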